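(* Let $F$ be a Banach lattice, $E$ a Banach space and $T\in\mathcal{L}(F,E)$. (i) If $T$ is DNS, then $T$ is weakly DNS. (ii) If $T$ is strongly DNS, then $T$ is strictly DNS.
   Context: $\mathrm{S}_F$ is the unit sphere; $x,y$ disjoint means $|x|\wedge|y|=0$. $T$ is DNS if there is no disjoint $(f_n)\subset\mathrm{S}_F$ with $\|Tf_n\|\to0$; strictly DNS if there is $\delta>0$ such that no disjoint $(f_n)\subset\mathrm{S}_F$ satisfies $\|Tf_n\|\le\delta$ for all $n$. The un-topology on $F$ has zero neighborhood base $\{f:\||f|\wedge h\|<\varepsilon\}$, $h\in F_+$, $\varepsilon>0$; the una-topology is defined the same way with $h$ in the positive part of the ideal $F^a$ of order continuous elements of $F$. $T$ is weakly (resp. strongly) DNS if there is no net $(f_i)\subset\mathrm{S}_F$ that is un-null (resp. una-null) and satisfies $\|Tf_i\|\to0$. *)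

(* Banach lattices are not in the library; we
   define them here as a complete normed space over a realType together with
   a vector-lattice order (a relation [le] and a binary supremum [jn]). *)
From HB Require Import structures.
From mathcomp Require Import all_boot all_order all_algebra.
From mathcomp Require Import all_classical all_reals all_analysis.
Set Implicit Arguments. Unset Strict Implicit. Unset Printing Implicit Defensive.
Import Order.TTheory GRing.Theory Num.Theory.
Import numFieldNormedType.Exports.
Local Open Scope ring_scope.
Local Open Scope classical_set_scope.

Section BanachLattice.
Variable R : realType.
Variable F : normedModType R.
Variable le : F -> F -> Prop.
Variable jn : F -> F -> F.

Definition lmeet (x y : F) : F := - jn (- x) (- y).
Definition labs (x : F) : F := jn x (- x).

(* [le], [jn] make F a normed vector lattice (Riesz space with a
   lattice norm). Together with completeness of F this is a Banach lattice. *)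
Definition is_normed_lattice : Prop :=
  [/\ (forall x, le x x),
      (forall x y, le x y -> le y x -> x = y)
    & (forall x y z, le x y -> le y z -> le x z)] /\
  [/\ (forall x y z, le x y -> le (x + z) (y + z)),
      (forall (a : R) x y, 0 <= a -> le x y -> le (a *: x) (a *: y)),
      (forall x y, le x (jn x y) /\ le y (jn x y)),
      (forall x y z, le x z -> le y z -> le (jn x y) z)
    & (forall x y, le (labs x) (labs y) -> `|x| <= `|y|)].

Definition disjoint (x y : F) : Prop := lmeet (labs x) (labs y) = 0.

Definition positive (x : F) : Prop := le 0 x.

Definition directed (I : Type) (leI : I -> I -> Prop) : Prop :=
  [/\ inhabited I, (forall i, leI i i),
      (forall i j k, leI i j -> leI j k -> leI i k)
    & (forall i j, exists k, leI i k /\ leI j k)].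

Definition net_to0 (I : Type) (leI : I -> I -> Prop) (a : I -> R) : Prop :=
  forall eps : R, 0 < eps -> exists i0, forall i, leI i0 i -> `|a i| < eps.

(* Order continuous element x: every net u_i decreasing to 0 (in order) with
   0 <= u_i <= |x| is norm-null.  F^a is the set of these elements. *)
Definition order_continuous_elt (x : F) : Prop :=
  forall (I : Type) (leI : I -> I -> Prop) (u : I -> F),
    directed leI ->
    (forall i, le 0 (u i) /\ le (u i) (labs x)) ->
    (forall i j, leI i j -> le (u j) (u i)) ->
    (forall z, (forall i, le z (u i)) -> le z 0) ->
    net_to0 leI (fun i => `|u i|).

Definition un_null (I : Type) (leI : I -> I -> Prop) (f : I -> F) : Prop :=
  forall h, positive h -> net_to0 leI (fun i => `|lmeet (labs (f i)) h|).

Definition una_null (I : Type) (leI : I -> I -> Prop) (f : I -> F) : Prop :=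
  forall h, positive h -> order_continuous_elt h ->
    net_to0 leI (fun i => `|lmeet (labs (f i)) h|).

Variable E : normedModType R.

Definition disjoint_seq (f : nat -> F) : Prop :=
  forall n m, n <> m -> disjoint (f n) (f m).

Definition DNS (T : F -> E) : Prop :=
  ~ exists f : nat -> F, [/\ (forall n, `|f n| = 1), disjoint_seq f
      & (fun n => `|T (f n)|) @ \oo --> (0 : R)].

Definition strictly_DNS (T : F -> E) : Prop :=
  exists delta : R, 0 < delta /\
    ~ exists f : nat -> F, [/\ (forall n, `|f n| = 1), disjoint_seq f
        & (forall n, `|T (f n)| <= delta)].

Definition weakly_DNS (T : F -> E) : Prop :=
  ~ exists (I : Type) (leI : I -> I -> Prop) (f : I -> F),
      [/\ directed leI, (forall i, `|f i| = 1), un_null leI f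
        & net_to0 leI (fun i => `|T (f i)|)].

Definition strongly_DNS (T : F -> E) : Prop :=
  ~ exists (I : Type) (leI : I -> I -> Prop) (f : I -> F),
      [/\ directed leI, (forall i, `|f i| = 1), una_null leI f
        & net_to0 leI (fun i => `|T (f i)|)].

End BanachLattice.

(* (ii) is proved by contraposition: if T is not strictly DNS, then for every
   k there is a normalized disjoint sequence g_k with |T g_k n| <= 1/(k+1).
   A disjoint sequence lying below an order continuous element tends to 0 in
   norm, so along g_k the quantities || |g_k n| /\ h || eventually become
   small for finitely many order continuous h >= 0 at a time; picking such
   terms along the directed set (k, finite set of h's, precision) yields a
   normalized una-null net whose image under T is null.

   From a normalized un-null net f with
   T f -> 0 we extract a sequence y_n = f_(i_n) with || |y_n| /\ 4^n S_n ||
   and |T y_n| below 1/(n+1), where S_n = |y_0| + ... + |y_(n-1)|.  With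
   u = sum_k 2^-k |y_k| (a norm-convergent series, by completeness of F) and
   v_n = 4^n S_n + 2^-n u, the elements d_n = (y_n^+ - v_n)^+ - (y_n^- - v_n)^+
   are pairwise disjoint and |y_n - d_n| = O(1/n); normalizing the d_n gives
   a disjoint normalized sequence with T d_n -> 0, so T is not DNS. *)

From Pilot Require Import Defs.
From HB Require Import structures.
From mathcomp Require Import all_boot all_order all_algebra.
From mathcomp Require Import all_classical all_reals all_analysis.
From mathcomp Require Import lra.
Import Order.TTheory GRing.Theory Num.Theory.
Import numFieldNormedType.Exports.
Set Implicit Arguments. Unset Strict Implicit. Unset Printing Implicit Defensive.
Local Open Scope ring_scope.
Local Open Scope classical_set_scope.

Lemma inv_succ_lt (R : realType) (eps : R) : 0 < eps -> exists m : nat, (m.+1%:R : R)^-1 < eps.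
Proof.
move=> e0; have ie : 0 <= eps^-1 by rewrite invr_ge0 ltW.
have := archi_boundP ie; set N := Num.Def.archi_bound _ => hN.
exists N; rewrite invf_plt ?posrE ?ltr0Sn //; apply: lt_le_trans hN _.
by rewrite ler_nat.
Qed.

Lemma inv_succ_anti {R : realType} (m m' : nat) :
  (m <= m')%N -> (m'.+1%:R : R)^-1 <= (m.+1%:R)^-1.
Proof. by move=> h; rewrite lef_pV2 ?posrE ?ltr0Sn // ler_nat. Qed.

Lemma ltr0_inv_succ {R : realType} (m : nat) : 0 < (m.+1%:R : R)^-1.
Proof. by rewrite invr_gt0 ltr0Sn. Qed.

Lemma le_inv_succ_eq0 (R : realType) (a b : R) : 0 <= a ->
  (forall k : nat, a <= b / k.+1%:R) -> a = 0.
Proof.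
move=> a0 h; apply/eqP; rewrite eq_le a0 andbT; apply/negP => /negP.
rewrite -ltNge => ap; have b0 : 0 <= b by have := le_trans a0 (h 0%N); rewrite divr1.
have ba : 0 <= b / a by rewrite divr_ge0 // ltW.
have := archi_boundP ba; set k := Num.Def.archi_bound _ => hk.
have := h k; rewrite ler_pdivlMr ?ltr0Sn // => hh.
have : b / a < k.+1%:R by apply: lt_le_trans hk _; rewrite ler_nat.
rewrite ltr_pdivrMr // => hb.
by move: hh; rewrite leNgt mulrC hb.
Qed.

Lemma cvg_inv_succ_bound {R : realType} (a : nat -> R) (C : R) :
  (forall n, `|a n| <= C * (n.+1%:R)^-1) -> a @ \oo --> 0.
Proof.
move=> ha; apply/cvgrPdist_lt => eps e0.
have C0 : 0 <= C by have := le_trans (normr_ge0 _) (ha 0%N); rewrite invr1 mulr1.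
have [m0 hm0] := inv_succ_lt (divr_gt0 e0 (ltr_pwDr ltr01 C0)).
exists m0 => // n /= hn; rewrite sub0r normrN; apply: le_lt_trans (ha n) _.
apply: (@le_lt_trans _ _ ((C + 1) * (n.+1%:R)^-1)).
  by apply: ler_wpM2r; [exact/ltW/ltr0_inv_succ|lra].
by rewrite mulrC -ltr_pdivlMr ?ltr_pwDr //; apply: le_lt_trans (inv_succ_anti hn) hm0.
Qed.

Section VectorLattice.
Variables (R : realType) (F : normedModType R) (le : F -> F -> Prop) (jn : F -> F -> F).
Hypothesis HF : is_normed_lattice le jn.
Local Notation meet := (lmeet jn).
Local Notation mod := (labs jn).

Lemma lat_refl x : le x x. Proof. by case: HF => [[h _ _] _]; apply: h. Qed.
Lemma lat_anti x y : le x y -> le y x -> x = y. Proof. by case: HF => [[_ h _] _]; apply: h. Qed.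
Lemma lat_trans x y z : le x y -> le y z -> le x z. Proof. by case: HF => [[_ _ h]] _; apply: h. Qed.
Lemma lat_addr x y z : le x y -> le (x + z) (y + z). Proof. by case: HF => _ [h _ _ _ _]; apply: h. Qed.
Lemma lat_scale (a : R) x y : 0 <= a -> le x y -> le (a *: x) (a *: y).
Proof. by case: HF => _ [_ h _ _ _]; apply: h. Qed.
Lemma lat_joinl x y : le x (jn x y). Proof. by case: HF => _ [_ _ h _ _]; case: (h x y). Qed.
Lemma lat_joinr x y : le y (jn x y). Proof. by case: HF => _ [_ _ h _ _]; case: (h x y). Qed.
Lemma lat_join_lub x y z : le x z -> le y z -> le (jn x y) z.
Proof. by case: HF => _ [_ _ _ h _]; apply: h. Qed.
Lemma lat_norm x y : le (mod x) (mod y) -> `|x| <= `|y|.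
Proof. by case: HF => _ [_ _ _ _ h]; apply: h. Qed.

Lemma lat_addl x y z : le x y -> le (z + x) (z + y).
Proof. by move=> h; rewrite ![z + _]addrC; apply: lat_addr. Qed.
Lemma lat_add2 a b c d : le a b -> le c d -> le (a + c) (b + d).
Proof. move=> h1 h2; apply: (lat_trans (lat_addr c h1)); exact: lat_addl. Qed.
Lemma lat_addr_ge0 x z : le 0 z -> le x (x + z).
Proof. by move=> h; have := lat_addl x h; rewrite addr0. Qed.
Lemma lat_addl_ge0 x z : le 0 z -> le x (z + x).
Proof. by move=> h; rewrite addrC; apply: lat_addr_ge0. Qed.
Lemma lat_add_ge0 x y : le 0 x -> le 0 y -> le 0 (x + y).
Proof. by move=> hx hy; have := lat_add2 hx hy; rewrite addr0. Qed.
Lemma lat_opp x y : le x y -> le (- y) (- x).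
Proof.
move=> h; have := lat_addr (- x - y) h.
by rewrite addrA subrr add0r addrCA subrr addr0.
Qed.
Lemma lat_oppK x y : le (- y) (- x) -> le x y.
Proof. by move/lat_opp; rewrite !opprK. Qed.
Lemma lat_subr_ge0 x y : le x y -> le 0 (y - x).
Proof. by move=> h; have := lat_addr (- x) h; rewrite subrr. Qed.
Lemma lat_ge0_subr x y : le 0 (y - x) -> le x y.
Proof. by move=> h; have := lat_addr x h; rewrite add0r subrK. Qed.
Lemma lat_scale_ge0 (c : R) x : 0 <= c -> le 0 x -> le 0 (c *: x).
Proof. by move=> c0 h; have := lat_scale c0 h; rewrite scaler0. Qed.

Lemma join_comm x y : jn x y = jn y x.
Proof. by apply: lat_anti; apply: lat_join_lub; (apply: lat_joinl || apply: lat_joinr). Qed.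

Lemma join_addr x y z : jn (x + z) (y + z) = jn x y + z.
Proof.
apply: lat_anti.
  by apply: lat_join_lub; apply: lat_addr; (apply: lat_joinl || apply: lat_joinr).
have h : le (jn x y) (jn (x + z) (y + z) - z).
  apply: lat_join_lub.
    by have := lat_addr (- z) (lat_joinl (x + z) (y + z)); rewrite addrK.
  by have := lat_addr (- z) (lat_joinr (x + z) (y + z)); rewrite addrK.
by have := lat_addr z h; rewrite subrK.
Qed.

Lemma join_mono a b a' b' : le a a' -> le b b' -> le (jn a b) (jn a' b').
Proof.
move=> h1 h2; apply: lat_join_lub.
  exact: lat_trans h1 (lat_joinl _ _).
exact: lat_trans h2 (lat_joinr _ _).
Qed.

Lemma join_scale (c : R) x y : 0 < c -> jn (c *: x) (c *: y) = c *: jn x y.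
Proof.
move=> c0; have c0' := ltW c0; have cn : c != 0 by rewrite gt_eqF.
apply: lat_anti.
  by apply: lat_join_lub; apply: lat_scale => //; (apply: lat_joinl || apply: lat_joinr).
have ci : 0 <= c^-1 by rewrite invr_ge0.
have h : le (jn x y) (c^-1 *: jn (c *: x) (c *: y)).
  apply: lat_join_lub.
    by rewrite -{1}(scalerK cn x); apply: lat_scale => //; apply: lat_joinl.
  by rewrite -{1}(scalerK cn y); apply: lat_scale => //; apply: lat_joinr.
by have := lat_scale c0' h; rewrite scalerA mulfV // scale1r.
Qed.

Lemma meetl x y : le (meet x y) x.
Proof. by apply: lat_oppK; rewrite /lmeet opprK; apply: lat_joinl. Qed.
Lemma meetr x y : le (meet x y) y.
Proof. by apply: lat_oppK; rewrite /lmeet opprK; apply: lat_joinr. Qed.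
Lemma meet_glb z x y : le z x -> le z y -> le z (meet x y).
Proof.
move=> h1 h2; apply: lat_oppK; rewrite /lmeet opprK.
by apply: lat_join_lub; apply: lat_opp.
Qed.
Lemma meet_comm x y : meet x y = meet y x. Proof. by rewrite /lmeet join_comm. Qed.
Lemma meet_mono a b a' b' : le a a' -> le b b' -> le (meet a b) (meet a' b').
Proof.
move=> h1 h2; apply: meet_glb.
  exact: lat_trans (meetl _ _) h1.
exact: lat_trans (meetr _ _) h2.
Qed.
Lemma meet_addr x y z : meet (x + z) (y + z) = meet x y + z.
Proof. by rewrite /lmeet !opprD join_addr opprD opprK. Qed.
Lemma meet_scale (c : R) x y : 0 < c -> meet (c *: x) (c *: y) = c *: meet x y.
Proof. by move=> c0; rewrite /lmeet -!scalerN join_scale // scalerN. Qed.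
Lemma meet_ge0 a b : le 0 a -> le 0 b -> le 0 (meet a b).
Proof. exact: meet_glb. Qed.

Lemma join_add_meet x y : x + y = jn x y + meet x y.
Proof.
rewrite /lmeet.
have -> : jn x y = jn (- x) (- y) + (x + y).
  by rewrite -join_addr addrA addNr add0r addrCA addNr addr0 join_comm.
by rewrite addrAC subrr add0r.
Qed.

Lemma mod_ge0 x : le 0 (mod x).
Proof.
have h := lat_add2 (lat_joinl x (- x)) (lat_joinr x (- x)); rewrite subrr in h.
have h2 := @lat_scale (2%:R^-1 : R) _ _ ^~ h.
rewrite scaler0 in h2; rewrite /labs.
have e : jn x (- x) + jn x (- x) = (2%:R : R) *: jn x (- x).
  by rewrite scaler_nat mulr2n.
rewrite e scalerA mulVf ?scale1r ?pnatr_eq0 // in h2.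
by apply: h2; rewrite invr_ge0 ler0n.
Qed.

Lemma mod_id x : le 0 x -> mod x = x.
Proof.
move=> h; apply: lat_anti; last exact: lat_joinl.
apply: lat_join_lub; first exact: lat_refl.
by apply: lat_trans (lat_opp h) _; rewrite oppr0.
Qed.

Lemma mod_mod x : mod (mod x) = mod x.
Proof. exact/mod_id/mod_ge0. Qed.

Lemma norm_mod x : `|mod x| = `|x|.
Proof.
by apply/eqP; rewrite eq_le; apply/andP; split; apply: lat_norm; rewrite mod_mod; apply: lat_refl.
Qed.

Lemma norm_mono a b : le 0 a -> le a b -> `|a| <= `|b|.
Proof. by move=> ha hab; apply: lat_norm; rewrite !mod_id //; exact: lat_trans hab. Qed.

Lemma mod_scale (c : R) x : 0 < c -> mod (c *: x) = c *: mod x.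
Proof. by move=> c0; rewrite /labs -scalerN join_scale. Qed.

Lemma mod_sub_le a b : le 0 a -> le 0 b -> le (mod (a - b)) (a + b).
Proof.
move=> ha hb.
have Nb : le (- b) b by apply: (lat_trans _ hb); have := lat_opp hb; rewrite oppr0.
have Na : le (- a) a by apply: (lat_trans _ ha); have := lat_opp ha; rewrite oppr0.
apply: lat_join_lub; first exact: lat_addl.
by rewrite opprB addrC; apply: lat_addr.
Qed.

Lemma meet_addl_eq0 a b c : le 0 a -> le 0 b -> le 0 c ->
  meet a c = 0 -> meet b c = 0 -> meet (a + b) c = 0.
Proof.
move=> ha hb hc hac hbc; set d := meet (a + b) c.
have d0 : le 0 d by apply: meet_ge0 => //; exact: lat_add_ge0.
have h1 : le (d - a) b.
  by have := lat_addr (- a) (meetl (a + b) c); rewrite addrAC subrr add0r.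
have h2 : le (d - a) c.
  apply: lat_trans (meetr (a + b) c); have := lat_addl d (lat_opp ha).
  by rewrite oppr0 addr0.
have h3 : le d a.
  have := meet_glb h1 h2; rewrite hbc => h.
  by have := lat_addr a h; rewrite subrK add0r.
have := meet_glb h3 (meetr (a + b) c); rewrite hac => h4.
exact: lat_anti.
Qed.

Lemma meet_addr_eq0 a b c : le 0 a -> le 0 b -> le 0 c ->
  meet c a = 0 -> meet c b = 0 -> meet c (a + b) = 0.
Proof. by move=> *; rewrite meet_comm meet_addl_eq0 // meet_comm. Qed.

Lemma meet_scale_eq0 (c c' : R) a b : 0 < c -> 0 < c' -> le 0 a -> le 0 b ->
  meet a b = 0 -> meet (c *: a) (c' *: b) = 0.
Proof.
move=> c0 c'0 ha hb hab; apply: lat_anti; last first.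
  by apply: meet_ge0; apply: lat_scale_ge0 => //; apply: ltW.
have cc : 0 < c + c' by apply: addr_gt0.
have : le (meet (c *: a) (c' *: b)) (meet ((c + c') *: a) ((c + c') *: b)).
  apply: meet_mono; rewrite scalerDl.
    exact/lat_addr_ge0/lat_scale_ge0/ha/ltW.
  exact/lat_addl_ge0/lat_scale_ge0/hb/ltW.
by rewrite meet_scale // hab scaler0.
Qed.

Definition ppart x := jn x 0.
Definition npart x := jn (- x) 0.

Lemma ppart_ge0 x : le 0 (ppart x). Proof. exact: lat_joinr. Qed.
Lemma npart_ge0 x : le 0 (npart x). Proof. exact: lat_joinr. Qed.
Lemma ppart_le_mod x : le (ppart x) (mod x).
Proof. by apply: lat_join_lub; [apply: lat_joinl|apply: mod_ge0]. Qed.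
Lemma npart_le_mod x : le (npart x) (mod x).
Proof. by apply: lat_join_lub; [apply: lat_joinr|apply: mod_ge0]. Qed.

Lemma ppartE x : ppart x = x + npart x.
Proof. by rewrite /ppart /npart addrC -join_addr addNr add0r join_comm. Qed.

Lemma meet_ppart_npart x : meet (ppart x) (npart x) = 0.
Proof.
rewrite ppartE -{2}[npart x]add0r meet_addr.
have -> : meet x 0 = - npart x by rewrite /lmeet /npart oppr0.
by rewrite addNr.
Qed.

Lemma ppart_mono a b : le a b -> le (ppart a) (ppart b).
Proof. by move=> h; apply: join_mono h (lat_refl 0). Qed.

Lemma sub_ppart a v : a - ppart (a - v) = meet a v.
Proof.
have -> : ppart (a - v) = jn (- v) (- a) + a by rewrite /ppart -join_addr addNr addrC.
by rewrite opprD addrA addrAC subrr add0r /lmeet join_comm.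
Qed.

Lemma meet_add_le a w e : le 0 e -> le (meet a (w + e)) (meet a w + e).
Proof.
move=> he; rewrite -meet_addr; apply: meet_mono; last exact: lat_refl.
exact: lat_addr_ge0.
Qed.

(* If mu * lam >= 1, the elements (a - lam b)^+ and (b - mu a)^+ are disjoint
   (a, b >= 0): the second lies below lam^-1 (a - lam b)^-. *)
Lemma ppart_sub_disjoint a b (lam mu : R) : le 0 a -> le 0 b -> 0 < lam -> 0 < mu ->
  1 <= lam * mu -> meet (ppart (a - lam *: b)) (ppart (b - mu *: a)) = 0.
Proof.
move=> ha hb l0 m0 lm1.
have li : 0 < lam^-1 by rewrite invr_gt0.
have h1 : le (ppart (b - mu *: a)) (lam^-1 *: npart (a - lam *: b)).
  rewrite /npart -[X in jn _ X](scaler0 _ lam^-1) -join_scale //.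
  apply: join_mono; last by rewrite !scaler0; apply: lat_refl.
  rewrite opprB scalerBr scalerA mulVf ?gt_eqF // scale1r.
  apply/lat_addl/lat_opp/lat_ge0_subr; rewrite -scalerBl.
  apply: lat_scale_ge0 => //; rewrite subr_ge0 -(@ler_pM2l _ lam) // mulfV ?gt_eqF //.
apply: lat_anti; last by apply: meet_ge0; apply: ppart_ge0.
apply: lat_trans (meet_mono (lat_refl _) h1) _.
rewrite -[X in meet X _]scale1r meet_scale_eq0 //; first exact: lat_refl.
- exact: ppart_ge0.
- exact: npart_ge0.
- exact: meet_ppart_npart.
Qed.

(* Archimedean property: if all multiples (k+1) z lie below h, then z <= 0,
   since the norm of z^+ is at most |h|/(k+1) for every k. *)
Lemma archimedean_le0 z h : le 0 h -> (forall k : nat, le (z *+ k.+1) h) -> le z 0.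
Proof.
move=> h0 zk; suff : ppart z = 0 by move=> <-; apply: lat_joinl.
apply/eqP; rewrite -normr_eq0; apply/eqP/(@le_inv_succ_eq0 _ _ `|h|) => // k.
have kp : 0 < (k.+1%:R : R)^-1 by rewrite invr_gt0 ltr0Sn.
have : le (ppart z) ((k.+1%:R : R)^-1 *: h).
  apply: lat_join_lub; last exact: lat_scale_ge0 (ltW kp) h0.
  have := lat_scale (ltW kp) (zk k).
  by rewrite -[z *+ _]scaler_nat scalerA mulVf ?scale1r.
move/(norm_mono (ppart_ge0 _)); rewrite normrZ gtr0_norm // mulrC.
by [].
Qed.

(* The partial sums s_n = x_0 + ... + x_(n-1) increase below h;
   the gaps y - s_n, for y an upper bound of (s_m) below h, form a net that
   decreases to 0 in order, hence to 0 in norm, and x_n = gap_n - gap_(n+1). *)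
Section DisjointDominated.
Variables (x : nat -> F) (h : F).
Hypotheses (h0 : le 0 h) (x0 : forall n, le 0 (x n)) (xh : forall n, le (x n) h)
  (xdisj : forall n m, n <> m -> meet (x n) (x m) = 0).

Local Definition psum n := \sum_(k < n) x k.

Lemma psumS n : psum n.+1 = psum n + x n. Proof. by rewrite /psum big_ord_recr. Qed.
Lemma psum0 : psum 0 = 0. Proof. by rewrite /psum big_ord0. Qed.

Lemma psum_ge0 n : le 0 (psum n).
Proof.
elim: n => [|n IH]; first by rewrite psum0; apply: lat_refl.
by rewrite psumS; apply: lat_add_ge0.
Qed.

Lemma psum_mono n m : (n <= m)%N -> le (psum n) (psum m).
Proof.
move/subnK => <-; elim: (m - n)%N => [|k IH]; first by rewrite add0n; apply: lat_refl.
by rewrite addSn psumS; apply: lat_trans IH _; apply: lat_addr_ge0.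
Qed.

Lemma psum_meet_eq0 n m : (n <= m)%N -> meet (psum n) (x m) = 0.
Proof.
elim: n => [|n IH] hnm.
  by rewrite psum0; apply: lat_anti; [apply: meetl|apply: meet_ge0; [apply: lat_refl|]].
rewrite psumS; apply: meet_addl_eq0 => //; first exact: psum_ge0.
  exact/IH/ltnW.
by apply: xdisj => e; move: hnm; rewrite e ltnn.
Qed.

(* Being disjoint, the partial sums are joins of terms below h. *)
Lemma psum_le n : le (psum n) h.
Proof.
elim: n => [|n IH]; first by rewrite psum0.
by rewrite psumS join_add_meet psum_meet_eq0 // addr0; apply: lat_join_lub.
Qed.

Local Definition upper_index :=
  {p : F * nat | (forall m, le (psum m) p.1) /\ le p.1 h}.
Local Definition upper_le (p q : upper_index) :=
  le (sval q).1 (sval p).1 /\ ((sval p).2 <= (sval q).2)%N.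
Local Definition gap (p : upper_index) := (sval p).1 - psum (sval p).2.

Lemma upper_index_directed : directed upper_le.
Proof.
split.
- by constructor; exists (h, 0%N); split => /=; [apply: psum_le|apply: lat_refl].
- by move=> i; split; [apply: lat_refl|].
- by move=> i j k [h1 h2] [h3 h4]; split; [apply: lat_trans h3 h1|apply: leq_trans h4].
- move=> [[y n] [yu yh]] [[y' n'] [yu' yh']].
  have P : (forall m, le (psum m) (meet y y')) /\ le (meet y y') h.
    by split; [move=> m; apply: meet_glb|apply: lat_trans (meetl _ _) yh].
  exists (exist _ (meet y y', maxn n n') P); split; split => /=;
    by [apply: meetl|apply: leq_maxl|apply: meetr|apply: leq_maxr].
Qed.

Lemma gap_bounds i : le 0 (gap i) /\ le (gap i) (mod h).
Proof.
case: i => [[y n] [yu yh]]; rewrite /gap /=; split; first exact: lat_subr_ge0.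
rewrite mod_id //; apply: lat_trans yh.
by have := lat_addl y (lat_opp (psum_ge0 n)); rewrite oppr0 addr0.
Qed.

Lemma gap_decr i j : upper_le i j -> le (gap j) (gap i).
Proof.
case: i j => [[y n] ?] [[y' n'] ?] [/= h1 h2]; rewrite /gap /=.
exact/(lat_add2 h1)/lat_opp/psum_mono.
Qed.

(* A lower bound z of all gaps can be subtracted from any upper bound y of
   the partial sums; iterating, (k+1) z lies below every gap. *)
Lemma gap_lower_bound_multiples z : (forall i, le z (gap i)) ->
  forall k i, le (z *+ k.+1) (gap i).
Proof.
move=> hz; elim=> [|k IH]; first by move=> i; rewrite mulr1n.
move=> [[y n] [yu yh]]; rewrite /gap /=.
have yz : forall m, le (psum m) (y - z).
  move=> m; have := hz (exist _ (y, m) (conj yu yh)); rewrite /gap /= => hm.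
  by have := lat_addr (psum m - z) hm; rewrite addrCA subrr addr0 addrA subrK.
have P : (forall m, le (psum m) (meet (y - z) h)) /\ le (meet (y - z) h) h.
  by split; [move=> m; apply: meet_glb; [apply: yz|apply: psum_le]|apply: meetr].
have := IH (exist _ (meet (y - z) h, n) P); rewrite /gap /= => hk.
have hk2 : le (z *+ k.+1) (y - z - psum n) by apply: lat_trans hk _; apply/lat_addr/meetl.
by have := lat_addl z hk2; rewrite -mulrS addrA addrCA subrr addr0.
Qed.

Lemma gap_inf z : (forall i, le z (gap i)) -> le z 0.
Proof.
move=> hz; apply: (archimedean_le0 h0) => k.
have := gap_lower_bound_multiples hz k (exist _ (h, 0%N) (conj psum_le (lat_refl h))).
by rewrite /gap /= psum0 subr0.
Qed.

Lemma disjoint_dominated_null : order_continuous_elt le jn h ->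
  forall eps : R, 0 < eps -> exists N, forall n, (N <= n)%N -> `|x n| < eps.
Proof.
move=> hoc eps e0.
have hnet := hoc _ _ _ upper_index_directed gap_bounds gap_decr gap_inf.
have [[[y0 n0] [yu yh]] Hi0] := hnet _ (divr_gt0 e0 (ltr0Sn _ 1)).
exists n0 => n hn.
have hq m : (n0 <= m)%N -> `|y0 - psum m| < eps / 2.
  move=> hm; have := Hi0 (exist _ (y0, m) (conj yu yh)).
  by rewrite /gap /= normr_id; apply; split => //=; apply: lat_refl.
have -> : x n = (y0 - psum n) - (y0 - psum n.+1).
  by rewrite psumS opprB addrC addrA subrK [psum n + _]addrC addrK.
apply: le_lt_trans (ler_normB _ _) _.
by rewrite (splitr eps) ltrD // hq // leqW.
Qed.
End DisjointDominated.

(* The positive cone is closed: a limit of eventually positive elements is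
   positive, because l^- <= |x_n - l| once x_n >= 0. *)
Lemma positive_closed (x : nat -> F) l N : x @ \oo --> l ->
  (forall n, (N <= n)%N -> le 0 (x n)) -> le 0 l.
Proof.
move=> hx hN.
suff hn : npart l = 0.
  by apply: lat_oppK; rewrite oppr0 -hn; apply: lat_joinl.
apply/eqP; rewrite -normr_eq0; apply/negPn/negP => hne.
have e0 : 0 < `|npart l| by rewrite lt0r hne normr_ge0.
move: (hx) => /cvgrPdist_lt /(_ _ e0) [n0 _ hn0].
set n := maxn n0 N.
have h1 : `|l - x n| < `|npart l| by apply: (hn0 n); rewrite /= leq_maxl.
have h2 : le (npart l) (mod (x n - l)).
  apply: lat_trans (ppart_le_mod _); apply: ppart_mono.
  by rewrite addrC; apply: lat_addr_ge0; apply: hN; apply: leq_maxr.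
have := norm_mono (npart_ge0 l) h2; rewrite norm_mod distrC => h3.
by move: h1; rewrite ltNge h3.
Qed.
End VectorLattice.

Section StronglyToStrictly.
Variables (R : realType) (F : normedModType R) (le : F -> F -> Prop) (jn : F -> F -> F).
Hypothesis HF : is_normed_lattice le jn.
Local Notation meet := (lmeet jn).
Local Notation mod := (labs jn).

Lemma disjoint_eventually_small (g : nat -> F) (H : seq F) (eps : R) :
  disjoint_seq jn g -> 0 < eps -> exists N, forall n, (N <= n)%N ->
    forall h, h \in H -> positive le h -> order_continuous_elt le jn h ->
    `|meet (mod (g n)) h| < eps.
Proof.
move=> gdisj e0; elim: H => [|h H [N hN]]; first by exists 0%N.
have [[hp hoc]|hno] := pselect (positive le h /\ order_continuous_elt le jn h); last first.
  exists N => n hn h'; rewrite in_cons => /orP [/eqP -> hp hoc|]; last exact: hN.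
  by exfalso; apply: hno.
have x0 n : le 0 (meet (mod (g n)) h) by apply: (meet_ge0 HF) => //; apply: (mod_ge0 HF).
have xh n : le (meet (mod (g n)) h) h by apply: (meetr HF).
have xdisj n n' : n <> n' -> meet (meet (mod (g n)) h) (meet (mod (g n')) h) = 0.
  move=> nn; apply: (lat_anti HF); last exact: (meet_ge0 HF).
  by rewrite -(gdisj n n' nn); apply: (meet_mono HF); apply: (meetl HF).
have [N1 hN1] := disjoint_dominated_null HF hp x0 xh xdisj hoc e0.
exists (maxn N N1) => n hn h'; rewrite in_cons => /orP [/eqP -> _ _|].
  by apply: hN1; apply: leq_trans hn; apply: leq_maxr.
by apply: hN; apply: leq_trans hn; apply: leq_maxl.
Qed.

(* The directed set of triples (k, H, m): a sequence index k, a finite set H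
   of test elements and a precision index m, ordered componentwise. *)
Definition test_index := (nat * seq F * nat)%type.
Definition test_le (i j : test_index) :=
  [/\ (i.1.1 <= j.1.1)%N, {subset i.1.2 <= j.1.2} & (i.2 <= j.2)%N].

Lemma test_index_directed : directed test_le.
Proof.
split.
- by constructor; exact: (0%N, [::], 0%N).
- by move=> i; split.
- move=> i j l [h1 h2 h3] [h4 h5 h6]; split.
  + exact: leq_trans h4.
  + by move=> x /h2 /h5.
  + exact: leq_trans h6.
- move=> [[k H] m] [[k' H'] m']; exists (maxn k k', H ++ H', maxn m m').
  split; split => /=; rewrite ?leq_maxl ?leq_maxr //.
    by move=> x hx; rewrite mem_cat hx.
  by move=> x hx; rewrite mem_cat hx orbT.
Qed.

Variables (E : normedModType R) (T : F -> E).

(* If T is not strictly DNS, it maps normalized disjoint sequences g_k to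
   sequences bounded by 1/(k+1); choosing at (k, H, m) a term of g_k that is
   1/(m+1)-small against H gives a normalized una-null net with T f -> 0. *)
Lemma strongly_DNS_strictly_DNS : strongly_DNS le jn T -> strictly_DNS jn T.
Proof.
move=> hs; apply: contrapT => hns; apply: hs.
have hg (k : nat) : exists g : nat -> F, [/\ (forall n, `|g n| = 1),
    disjoint_seq jn g & (forall n, `|T (g n)| <= (k.+1%:R : R)^-1)].
  by apply: contrapT => nf; apply: hns; exists (k.+1%:R : R)^-1; split.
have [g hgP] := choice hg.
have sel (i : test_index) : exists n, forall h, h \in i.1.2 -> positive le h ->
    order_continuous_elt le jn h -> `|meet (mod (g i.1.1 n)) h| < (i.2.+1%:R : R)^-1.
  have [_ gdisj _] := hgP i.1.1.
  have [N hN] := disjoint_eventually_small i.1.2 gdisj (ltr0_inv_succ i.2).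
  by exists N; apply: hN.
have [nsel hsel] := choice sel.
exists test_index, test_le, (fun i => g i.1.1 (nsel i)); split.
- exact: test_index_directed.
- by move=> i; have [g1 _ _] := hgP i.1.1; apply: g1.
- move=> h hp hoc eps e0; have [m0 hm0] := inv_succ_lt e0.
  exists (0%N, [:: h], m0) => -[[k H] m] [/= _ hH hm].
  rewrite normr_id; apply: lt_le_trans (hsel (k, H, m) h _ hp hoc) _.
    by apply: hH; rewrite mem_seq1.
  exact/ltW/(le_lt_trans (inv_succ_anti hm) hm0).
- move=> eps e0; have [k0 hk0] := inv_succ_lt e0.
  exists (k0, [::], 0%N) => -[[k H] m] [/= hk _ _].
  rewrite normr_id; have [_ _ g3] := hgP k.
  exact: le_lt_trans (g3 _) (le_lt_trans (inv_succ_anti hk) hk0).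
Qed.
End StronglyToStrictly.

Lemma continuous_linear_bound {R : realType} (F E : normedModType R) (T : {linear F -> E}) :
  continuous T -> exists M : R, 0 <= M /\ forall x, `|T x| <= M * `|x|.
Proof.
move=> HT; have [M [_ hM]] := (linear_boundedP T).1 ((linear_bounded_continuous T).2 HT).
exists (`|M| + 1); split; first by rewrite addr_ge0.
by apply: hM; rewrite (le_lt_trans (ler_norm M)) // ltrDl ltr01.
Qed.

Section BanachLattice.
Variables (R : realType) (F : completeNormedModType R) (le : F -> F -> Prop) (jn : F -> F -> F).
Hypothesis HF : is_normed_lattice le jn.
Local Notation meet := (lmeet jn).
Local Notation mod := (labs jn).

(* In a Banach lattice the series sum_k 2^-k b_k of normalized positive
   elements converges, and its sum u majorizes every term. *)
Lemma geometric_majorant (b : nat -> F) : (forall k, le 0 (b k)) -> (forall k, `|b k| = 1) ->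
  exists u, forall k, le (((2%:R : R)^-1) ^+ k *: b k) u.
Proof.
move=> b0 b1; set a := fun k => ((2%:R : R)^-1) ^+ k *: b k.
have a0 k : le 0 (a k) by apply: (lat_scale_ge0 HF) => //; rewrite exprn_ge0 // invr_ge0.
have hc : cvgn [normed series a].
  rewrite /normed_series_of; have -> : (fun n => `|a n|) = geometric 1 ((2%:R : R)^-1).
    apply: funext => n; rewrite /a normrZ b1 mulr1 normrX /= mul1r.
    by rewrite ger0_norm // invr_ge0.
  apply: is_cvg_geometric_series.
  by rewrite ger0_norm ?invr_ge0 // invf_lt1 // ltr1n.
have hu := normed_cvg hc; set u := limn (series a) in hu.
have smono n m : (n <= m)%N -> le (series a n) (series a m).
  move/subnK => <-; elim: (m - n)%N => [|k IH]; first by rewrite add0n; apply: (lat_refl HF).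
  by rewrite addSn seriesSr; apply: (lat_trans HF) IH _; apply: (lat_addr_ge0 HF).
exists u => k.
have hx : (fun M => series a M - series a k.+1) @ \oo --> u - series a k.+1.
  by apply: cvgB => //; apply: cvg_cst.
have := positive_closed HF hx (fun M hM => lat_subr_ge0 HF (smono _ _ hM)).
move/(lat_ge0_subr HF); apply: (lat_trans HF); rewrite seriesSr.
apply: (lat_addl_ge0 HF); have := smono 0%N k (leq0n _).
by rewrite /series /= big_geq.
Qed.

Variables (E : normedModType R) (T : {linear F -> E}).

Lemma normalize_disjoint (d : nat -> F) (c C : R) (N0 : nat) :
  disjoint_seq jn d -> 0 < c -> (forall n, (N0 <= n)%N -> c <= `|d n|) ->
  (forall n, `|T (d n)| <= C * (n.+1%:R)^-1) ->
  exists g : nat -> F, [/\ (forall n, `|g n| = 1), disjoint_seq jn g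
    & (fun n => `|T (g n)|) @ \oo --> (0 : R)].
Proof.
move=> ddisj c0 dlarge Td.
have dpos j : 0 < `|d (j + N0)| by apply: lt_le_trans (dlarge _ (leq_addl _ _)).
exists (fun j => (`|d (j + N0)|)^-1 *: d (j + N0)); split.
- by move=> j; rewrite normrZ normfV normr_id mulVf // gt_eqF.
- move=> n m nm; rewrite /Defs.disjoint !(mod_scale HF) ?invr_gt0 //.
  apply: (meet_scale_eq0 HF); rewrite ?invr_gt0 //; try exact: (mod_ge0 HF).
  by apply: ddisj => /addIn.
- apply: (@cvg_inv_succ_bound _ _ (c^-1 * C)) => j.
  rewrite normr_id linearZ normrZ normfV normr_id -mulrA.
  have C0 : 0 <= C by have := le_trans (normr_ge0 _) (Td 0%N); rewrite invr1 mulr1.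
  apply: ler_pM; rewrite ?invr_ge0 ?normr_ge0 //.
    by rewrite lef_pV2 ?posrE ?dpos // dlarge // leq_addl.
  apply: le_trans (Td _) _; apply: ler_wpM2l => //.
  by apply: inv_succ_anti; rewrite leq_addr.
Qed.

Section NetToSequence.
Variables (I : Type) (leI : I -> I -> Prop) (f : I -> F).
Hypotheses (hdir : directed leI) (f1 : forall i, `|f i| = 1)
  (f_un : un_null le jn leI f) (Tf0 : net_to0 leI (fun i => `|T (f i)|)).

Local Definition pow4 (n : nat) : R := (4%:R : R) ^+ n.
Local Definition pow2inv (n : nat) : R := ((2%:R : R)^-1) ^+ n.
Local Definition mod_sum (H : seq F) := \sum_(z <- H) mod z.

Lemma pow4_ge0 n : 0 <= pow4 n. Proof. by rewrite exprn_ge0. Qed.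
Lemma pow2inv_ge0 n : 0 <= pow2inv n. Proof. by rewrite exprn_ge0 // invr_ge0. Qed.

Lemma mod_sum_ge0 H : le 0 (mod_sum H).
Proof.
rewrite /mod_sum; elim: H => [|z H IH]; first by rewrite big_nil; apply: (lat_refl HF).
by rewrite big_cons; apply: (lat_add_ge0 HF) => //; apply: (mod_ge0 HF).
Qed.

Local Definition good (p : nat * seq F) (i : I) :=
  `|meet (mod (f i)) (pow4 p.1 *: mod_sum p.2)| < (p.1.+1%:R : R)^-1 /\
  `|T (f i)| < (p.1.+1%:R : R)^-1.

Lemma good_exists p : exists i, good p i.
Proof.
have e0 := @ltr0_inv_succ R p.1.
have hp : positive le (pow4 p.1 *: mod_sum p.2).
  by apply: (lat_scale_ge0 HF); [apply: pow4_ge0|apply: mod_sum_ge0].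
have [i1 h1] := f_un hp e0; have [i2 h2] := Tf0 e0.
have [_ _ _ hub] := hdir; have [i3 [h13 h23]] := hub i1 i2.
by exists i3; split; [have := h1 _ h13|have := h2 _ h23]; rewrite normr_id.
Qed.

Local Definition next_index p := projT1 (choice good_exists) p.
Lemma next_indexP p : good p (next_index p).
Proof. exact: (projT2 (choice good_exists) p). Qed.

Fixpoint history n : seq F :=
  if n is n'.+1 then rcons (history n') (f (next_index (n', history n'))) else [::].
Local Definition y n := f (next_index (n, history n)).
Local Definition S n := \sum_(k < n) mod (y k).

Lemma mod_sum_history n : mod_sum (history n) = S n.
Proof.
elim: n => [|n IH]; first by rewrite /mod_sum /S big_nil big_ord0.
by rewrite /mod_sum /= big_rcons /= -/(mod_sum _) IH /S big_ord_recr.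
Qed.

Lemma y_meet_small n : `|meet (mod (y n)) (pow4 n *: S n)| < (n.+1%:R : R)^-1.
Proof. by have [h _] := next_indexP (n, history n); rewrite -mod_sum_history. Qed.
Lemma Ty_small n : `|T (y n)| < (n.+1%:R : R)^-1.
Proof. by have [_ h] := next_indexP (n, history n). Qed.

Lemma S_ge0 n : le 0 (S n).
Proof. by rewrite -mod_sum_history; apply: mod_sum_ge0. Qed.

Lemma S_term m n : (m < n)%N -> le (mod (y m)) (S n).
Proof.
elim: n => [//|n IH]; rewrite /S big_ord_recr /= -/(S n) ltnS leq_eqVlt.
case/orP => [/eqP ->|hmn]; first exact/(lat_addl_ge0 HF)/S_ge0.
exact/(lat_trans HF (IH hmn))/(lat_addr_ge0 HF)/(mod_ge0 HF).
Qed.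

Lemma majorant_exists : exists u, forall k, le (pow2inv k *: mod (y k)) u.
Proof.
apply: geometric_majorant => k; first exact: (mod_ge0 HF).
by rewrite (norm_mod HF) f1.
Qed.
Local Definition u := proj1_sig (cid majorant_exists).
Lemma u_term k : le (pow2inv k *: mod (y k)) u.
Proof. exact: (proj2_sig (cid majorant_exists)). Qed.
Lemma u_ge0 : le 0 u.
Proof.
apply: (lat_trans HF) (u_term 0).
by apply: (lat_scale_ge0 HF); [apply: pow2inv_ge0|apply: (mod_ge0 HF)].
Qed.

Local Definition v n := pow4 n *: S n + pow2inv n *: u.
Local Definition dpos n := ppart jn (ppart jn (y n) - v n).
Local Definition dneg n := ppart jn (npart jn (y n) - v n).
Local Definition d n := dpos n - dneg n.

Lemma v_ge0 n : le 0 (v n).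
Proof.
apply: (lat_add_ge0 HF); apply: (lat_scale_ge0 HF).
- exact: pow4_ge0.
- exact: S_ge0.
- exact: pow2inv_ge0.
- exact: u_ge0.
Qed.

Lemma v_big m n : (m < n)%N -> le (pow4 n *: mod (y m)) (v n).
Proof.
move=> hmn; apply: (lat_trans HF) (lat_addr_ge0 HF _ (lat_scale_ge0 HF (pow2inv_ge0 n) u_ge0)).
by apply: (lat_scale HF); [apply: pow4_ge0|apply: S_term].
Qed.

Lemma v_small m n : le ((pow2inv m * pow2inv n) *: mod (y n)) (v m).
Proof.
apply: (lat_trans HF) (lat_addl_ge0 HF _ (lat_scale_ge0 HF (pow4_ge0 m) (S_ge0 m))).
by rewrite -scalerA; apply: (lat_scale HF); [apply: pow2inv_ge0|apply: u_term].
Qed.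

Lemma pow_product m n : (m <= n)%N -> 1 <= pow4 n * (pow2inv m * pow2inv n).
Proof.
move=> hmn.
have e : pow4 n * (pow2inv n * pow2inv n) = 1.
  rewrite /pow4 /pow2inv -!exprMn.
  have -> : (4%:R : R) * ((2%:R)^-1 * (2%:R)^-1) = 1.
    by rewrite -invfM -natrM divff // pnatr_eq0.
  by rewrite expr1n.
rewrite -e; apply: ler_wpM2l; first exact: pow4_ge0.
apply: ler_wpM2r; first exact: pow2inv_ge0.
by apply: ler_wiXn2l => //; rewrite invf_le1 // ler1n.
Qed.

(* The pieces (z - v_n)^+ with z <= |y_n| are pairwise disjoint in n: for
   m < n they lie below (|y_n| - 4^n |y_m|)^+ and (|y_m| - 2^-m 2^-n |y_n|)^+. *)
Lemma pieces_disjoint m n z z' : (m < n)%N -> le z (mod (y n)) -> le z' (mod (y m)) ->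
  meet (ppart jn (z - v n)) (ppart jn (z' - v m)) = 0.
Proof.
move=> hmn hz hz'.
have big : le (ppart jn (z - v n)) (ppart jn (mod (y n) - pow4 n *: mod (y m))).
  exact/(ppart_mono HF)/(lat_add2 HF hz)/(lat_opp HF)/v_big.
have small : le (ppart jn (z' - v m))
    (ppart jn (mod (y m) - (pow2inv m * pow2inv n) *: mod (y n))).
  exact/(ppart_mono HF)/(lat_add2 HF hz')/(lat_opp HF)/v_small.
apply: (lat_anti HF); last by apply: (meet_ge0 HF); apply: (ppart_ge0 HF).
apply: (lat_trans HF) (meet_mono HF big small) _.
rewrite (ppart_sub_disjoint HF); first exact: (lat_refl HF).
- exact: (mod_ge0 HF).
- exact: (mod_ge0 HF).
- by rewrite exprn_gt0.
- by rewrite mulr_gt0 // exprn_gt0 // invr_gt0.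
- exact/pow_product/ltnW.
Qed.

Lemma d_disjoint : disjoint_seq jn d.
Proof.
have supp_disj m n : (m < n)%N -> meet (dpos n + dneg n) (dpos m + dneg m) = 0.
  move=> hmn; have G := ppart_ge0 HF.
  have D z : le z (mod (y n)) -> meet (ppart jn (z - v n)) (dpos m + dneg m) = 0.
    move=> hz; apply: (meet_addr_eq0 HF); try exact: G.
      exact: (pieces_disjoint hmn hz (ppart_le_mod HF _)).
    exact: (pieces_disjoint hmn hz (npart_le_mod HF _)).
  apply: (meet_addl_eq0 HF); try exact: G.
  - exact: (lat_add_ge0 HF (G _) (G _)).
  - exact: (D _ (ppart_le_mod HF _)).
  - exact: (D _ (npart_le_mod HF _)).
move=> n m nm; rewrite /Defs.disjoint.
have hle k : le (mod (d k)) (dpos k + dneg k) by apply: (mod_sub_le HF); apply: (ppart_ge0 HF).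
apply: (lat_anti HF); last by apply: (meet_ge0 HF); apply: (mod_ge0 HF).
apply: (lat_trans HF) (meet_mono HF (hle n) (hle m)) _.
case: (ltngtP m n) => [hmn|hnm|e]; last by move: nm; rewrite e.
  by rewrite supp_disj //; apply: (lat_refl HF).
by rewrite (meet_comm HF) supp_disj //; apply: (lat_refl HF).
Qed.

Lemma pow2inv_le n : pow2inv n <= (n.+1%:R : R)^-1.
Proof.
rewrite /pow2inv exprVn -natrX lef_pV2 ?posrE ?ltr0Sn ?ltr0n ?expn_gt0 // ler_nat.
exact: ltn_expl.
Qed.

(* d_n is a small perturbation of y_n: y_n - d_n = (y_n^+ /\ v_n) - (y_n^- /\ v_n),
   and z /\ v_n <= (|y_n| /\ 4^n S_n) + 2^-n u for 0 <= z <= |y_n|. *)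
Lemma d_close n : `|y n - d n| <= 2 * (1 + `|u|) * (n.+1%:R : R)^-1.
Proof.
have e : y n - d n = meet (ppart jn (y n)) (v n) - meet (npart jn (y n)) (v n).
  rewrite -!(sub_ppart HF) /d /dpos /dneg.
  set a := ppart jn (y n); set b := npart jn (y n).
  set p := ppart jn (a - v n); set q := ppart jn (b - v n).
  have -> : y n = a - b by rewrite /a (ppartE HF) addrK.
  by rewrite opprD opprK addrACA opprB [q - b]addrC.
have hb z : le 0 z -> le z (mod (y n)) ->
    `|meet z (v n)| <= `|meet (mod (y n)) (pow4 n *: S n)| + pow2inv n * `|u|.
  move=> z0 hz.
  have h1 : le (meet z (v n)) (meet (mod (y n)) (pow4 n *: S n) + pow2inv n *: u).
    apply: (lat_trans HF) (meet_add_le HF _ _ (lat_scale_ge0 HF (pow2inv_ge0 n) u_ge0)).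
    exact: (meet_mono HF) hz (lat_refl HF _).
  apply: le_trans (norm_mono HF (meet_ge0 HF z0 (v_ge0 n)) h1) _.
  by apply: le_trans (ler_normD _ _) _; rewrite normrZ ger0_norm ?pow2inv_ge0.
have hb2 : `|meet (mod (y n)) (pow4 n *: S n)| + pow2inv n * `|u| <=
    (1 + `|u|) * (n.+1%:R : R)^-1.
  rewrite mulrDl mul1r; apply: lerD; first exact/ltW/y_meet_small.
  by rewrite mulrC; apply: ler_wpM2l => //; apply: pow2inv_le.
rewrite e; apply: le_trans (ler_normB _ _) _.
have h1 := hb _ (ppart_ge0 HF _) (ppart_le_mod HF _).
have h2 := hb _ (npart_ge0 HF _) (npart_le_mod HF _).
by rewrite -mulrA mulr_natl mulr2n; apply: lerD; apply: le_trans hb2.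
Qed.

Lemma d_large : exists N0, forall n, (N0 <= n)%N -> 2^-1 <= `|d n|.
Proof.
set K := 2 * (1 + `|u|).
have K0 : 0 < K by rewrite mulr_gt0 // ltr_pwDl.
have [N0 hN0] := inv_succ_lt (divr_gt0 (@ltr0_inv_succ R 1) K0).
exists N0 => n hn.
have hK : K * (n.+1%:R : R)^-1 <= 2^-1.
  rewrite mulrC -ler_pdivlMr //; apply: le_trans (ltW hN0).
  exact: inv_succ_anti.
have := ler_normD (y n - d n) (d n); rewrite subrK f1.
have := le_trans (d_close n) hK; lra.
Qed.

(* ... and T d_n = T y_n - T (y_n - d_n) is O(1/n) for bounded T. *)
Lemma Td_bound : continuous T -> exists C : R, forall n, `|T (d n)| <= C * (n.+1%:R)^-1.
Proof.
move=> HT; have [M [M0 hM]] := continuous_linear_bound HT.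
exists (1 + M * (2 * (1 + `|u|))) => n.
rewrite -[d n](subKr (y n)) linearB; apply: le_trans (ler_normB _ _) _.
rewrite mulrDl mul1r; apply: lerD; first exact/ltW/Ty_small.
by apply: le_trans (hM _) _; rewrite -mulrA; apply: ler_wpM2l => //; apply: d_close.
Qed.

Lemma net_to_disjoint_sequence : continuous T ->
  exists g : nat -> F, [/\ (forall n, `|g n| = 1), disjoint_seq jn g
    & (fun n => `|T (g n)|) @ \oo --> (0 : R)].
Proof.
move=> HT; have [N0 hN0] := d_large; have [C hC] := Td_bound HT.
exact: (normalize_disjoint d_disjoint (@ltr0_inv_succ R 1) hN0 hC).
Qed.
End NetToSequence.

Lemma DNS_weakly_DNS : continuous T -> DNS jn T -> weakly_DNS le jn T.
Proof.
move=> HT hdns [I [leI [f [hdir f1 f_un Tf0]]]]; apply: hdns.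
exact: (net_to_disjoint_sequence hdir f1 f_un Tf0 HT).
Qed.
End BanachLattice.

Theorem proposition5p6 (R : realType) (F : completeNormedModType R)
  (le : F -> F -> Prop) (jn : F -> F -> F)
  (HF : is_normed_lattice le jn)
  (E : completeNormedModType R) (T : {linear F -> E}) (HT : continuous T) :
  (DNS jn T -> weakly_DNS le jn T) /\
  (strongly_DNS le jn T -> strictly_DNS jn T).
Proof.
split.
- exact: (DNS_weakly_DNS HF HT).
- exact: (strongly_DNS_strictly_DNS HF).
Qed.
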